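(* Let $\mathbf{w}$ be an infinite overlap-free word over the alphabet $\{0,1\}$. Then there is a position $i$ such that no square (nonempty word of the form $xx$) occurs in $\mathbf{w}$ beginning at position $i$.
   Context: A finite word $w$ is an $\alpha$-power ($\alpha$ rational) if $w = x^n x'$ with $x'$ a prefix of $x$, $x$ nonempty, and $\alpha = n + |x'|/|x|$. A square is a $2$-power, i.e. a word $xx$ with $x$ nonempty. An overlap is a word that is a $\beta$-power for some $\beta > 2$. A (finite or infinite) word is overlap-free if none of its factors (contiguous subwords) is an overlap. *)

From mathcomp Require Import all_boot all_order all_algebra.
Set Implicit Arguments. Unset Strict Implicit. Unset Printing Implicit Defensive.
Import Order.TTheory GRing.Theory Num.Theory.

Definition wpow (T : eqType) (x : seq T) (n : nat) : seq T :=
  flatten (nseq n x).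

Definition is_power (T : eqType) (w : seq T) (alpha : rat) : Prop :=
  exists (x x' : seq T) (n : nat),
    [/\ x != [::], prefix x' x, w = wpow x n ++ x' &
        alpha = (n%:R + (size x')%:R / (size x)%:R)%R].

Definition is_overlap (T : eqType) (w : seq T) : Prop :=
  exists beta : rat, (2 < beta)%R /\ is_power w beta.

Definition factor (T : Type) (w : nat -> T) (i n : nat) : seq T :=
  mkseq (fun k => w (i + k)) n.

Definition overlap_free_inf (T : eqType) (w : nat -> T) : Prop :=
  forall i n, ~ is_overlap (factor w i n).

Definition square_at (T : eqType) (w : nat -> T) (i : nat) : Prop :=
  exists x : seq T, x != [::] /\ factor w i (2 * size x) = x ++ x.

From mathcomp Require Import all_boot all_order all_algebra.
From mathcomp Require Import zify.
Import Num.Theory.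

(* A binary overlap-free word has no overlap [axaxa]. Its doubles [aa] can only
   occur at positions of one parity (apart from position 0), so from some point
   on it factors into blocks [01] and [10]; the word of the first letters of
   these blocks is again overlap-free. Decoding twice, the once-decoded word
   contains a factor [a a a' a] (with [a' = ~~ a]), coming from a factor
   [b' b b] of the twice-decoded word. At the second letter of the block
   encoding the first [a] no square starts: a square of even period would
   extend one letter to the left to an overlap, one of odd period [>= 5] would
   make the next five letters alternate, and periods 1 and 3 are ruled out by
   the letters [a a a' a]. *)

Set Implicit Arguments.
Unset Strict Implicit.
Unset Printing Implicit Defensive.

(* The factor of length [2p+1] at [i] has period [p]: an overlap [axaxa] with [|ax| = p]. *)
Definition overlap_at (T : Type) (f : nat -> T) (i p : nat) : Prop :=
  forall k, k <= p -> f (i + k) = f (i + k + p).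

Definition axaxa_free (T : Type) (f : nat -> T) : Prop :=
  forall i p, 0 < p -> ~ overlap_at f i p.

Lemma overlap_free_inf_axaxa_free (T : eqType) (w : nat -> T) :
  overlap_free_inf w -> axaxa_free w.
Proof.
move=> ofw i p p_gt0 ovl; apply: (ofw i (p + p + 1)).
exists (2%:R + 1%:R / p%:R)%R; split; first by rewrite ltrDl divr_gt0 ?ltr0n.
exists (factor w i p), [:: w i], 2; split.
- by rewrite -size_eq0 size_mkseq -lt0n.
- by case: p p_gt0 {ovl} => // p _; rewrite /factor /= addn0 eqxx prefix0s.
- rewrite /wpow /= /factor /mkseq !iotaD !map_cat -!catA add0n.
  congr (_ ++ _); rewrite add0n /=; congr (_ ++ _).
    rewrite -{1}(addn0 p) iotaDl -map_comp; apply/eq_in_map => k.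
    rewrite mem_iota add0n => /andP[_ lt_kp] /=.
    by rewrite [RHS]ovl ?(ltnW lt_kp) // addnA addnAC.
  have := ovl 0 (leq0n p); have := ovl p (leqnn p).
  by rewrite !addn0 addnA => -> ->.
- by rewrite /factor size_mkseq.
Qed.

Definition double (f : nat -> bool) (i : nat) : bool := f i == f i.+1.

Lemma doubleN (f : nat -> bool) i : ~~ double f i -> f i.+1 = ~~ f i.
Proof. by rewrite /double; case: (f i); case: (f i.+1). Qed.

Section DoubleLetters.

Variable f : nat -> bool.
Hypothesis f_axaxa_free : axaxa_free f.

Lemma double_noncons i : double f i -> ~~ double f i.+1.
Proof.
move=> /eqP f_ii1; apply/negP => /eqP f_i1i2.
by case: (@f_axaxa_free i 1 isT) => -[|[|]] //= _; rewrite !addnS !addn0.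
Qed.

(* Otherwise [f] would contain the overlap [ababa]. *)
Lemma double_in_window i : exists2 k, k < 4 & double f (i + k).
Proof.
case: (boolP [exists k : 'I_4, double f (i + k)]) => [/existsP[k dk]|].
  by exists k.
move=> /existsPn no_double; exfalso.
have alt k : k < 4 -> f (i + k).+1 = ~~ f (i + k).
  by move=> lt_k4; apply/doubleN/(no_double (Ordinal lt_k4)).
case: (@f_axaxa_free i 2 isT) => k le_k2.
rewrite !addnS addn0 -addnS alt ?addnS ?alt ?negbK //; lia.
Qed.

(* For [d = 3] the letters from [i - 1] on read [b' b b b' b b b'], an overlap
   of period 3; for [d >= 5] the letters from [i + 1] on read [ababa]. *)
Lemma double_gap_even i d :
    0 < i -> double f i -> double f (i + d) ->
  (forall k, 0 < k < d -> ~~ double f (i + k)) -> ~~ odd d.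
Proof.
move=> i_gt0 di did gap; have [le5d|] := leqP 5 d.
  have [k lt_k4] := double_in_window i.+1; rewrite addSnnS => dk.
  have: 0 < k.+1 < d by lia.
  by move/gap; rewrite dk.
case: d did gap => [|[|[|[|[|]]]]] // did gap _.
  by move: (double_noncons di); rewrite -addn1 did.
case: i i_gt0 di did gap => // i _ di did gap.
have g1 := gap 1 isT; have g2 := gap 2 isT; rewrite !addSn !addnS !addn0 in did g1 g2.
have v1 : f i.+1 = ~~ f i by apply/doubleN; apply: contraTN di; apply: double_noncons.
have v2 : f i.+2 = ~~ f i by rewrite -(eqP di).
have v3 : f i.+3 = f i by rewrite doubleN // v2 negbK.
have v4 : f i.+4 = ~~ f i by rewrite doubleN // v3.
have v5 : f i.+4.+1 = ~~ f i by rewrite -(eqP did).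
have v6 : f i.+4.+2 = f i by rewrite doubleN ?v5 ?negbK //; apply: double_noncons.
case: (@f_axaxa_free i 3 isT) => -[|[|[|[|]]]] //= _; rewrite !addnS !addn0.
- by rewrite v3.
- by rewrite v1 v4.
- by rewrite v2 v5.
- by rewrite v3 v6.
Qed.

Lemma double_dist_even i d :
  0 < i -> double f i -> double f (i + d) -> ~~ odd d.
Proof.
elim/ltn_ind: d i => d IHd i i_gt0 di did.
case: (boolP (has (fun k => double f (i + k)) (iota 1 d.-1))).
  move=> /hasP[k]; rewrite mem_iota => /andP[k_gt0 lt_kd] dk.
  have le_kd : k <= d by lia.
  have ev_k : ~~ odd k by apply: (IHd k _ i) => //; lia.
  have ev_dk : ~~ odd (d - k).
    by apply: (IHd _ _ (i + k)); rewrite -?addnA ?subnKC //; lia.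
  by rewrite -(subnKC le_kd) oddD (negPf ev_k).
move=> /hasPn no_double; apply: (double_gap_even i_gt0 di did) => k /andP[k_gt0 lt_kd].
by apply: no_double; rewrite mem_iota; lia.
Qed.

Lemma double_odd_eq i j :
  0 < i -> 0 < j -> double f i -> double f j -> odd i = odd j.
Proof.
wlog le_ij : i j / i <= j => [hwlog|] i_gt0 j_gt0 di dj.
  by case: (leqP i j) => [|/ltnW] le; [|symmetry]; apply: hwlog.
have := @double_dist_even i (j - i) i_gt0 di; rewrite subnKC // => /(_ dj).
by rewrite -{2}(subnKC le_ij) oddD; case: (odd i); case: (odd (j - i)).
Qed.

Lemma exists_flip_double : exists k, ~~ double f k /\ double f k.+1.
Proof.
have [k _ dk] := double_in_window 1; rewrite add1n in dk.
by exists k; split=> //; apply: contraTN dk; apply: double_noncons.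
Qed.

End DoubleLetters.

(* From position [s] on, [f] is a concatenation of the blocks [01] and [10];
   [decode f s] reads off the first letter of each block. *)
Definition blocks_from (f : nat -> bool) (s : nat) : Prop :=
  forall m, ~~ double f (s + 2 * m).

Definition decode (f : nat -> bool) (s m : nat) : bool := f (s + 2 * m).

(* Start at a positive position of the parity opposite to that of the doubles. *)
Lemma exists_blocks_from (f : nat -> bool) :
  axaxa_free f -> exists s, blocks_from f s.
Proof.
move=> f_free; have [k _ dk] := double_in_window f_free 1.
exists (odd (1 + k)).+1 => m; apply/negP => dm.
have := double_odd_eq f_free _ _ dk dm; rewrite addn_gt0 ltn0Sn => /(_ isT isT).
by case: (odd (1 + k)); rewrite oddD oddM.
Qed.

Lemma blocks_fromE (f : nat -> bool) s m (b : bool) :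
  blocks_from f s -> f (s + 2 * m + b) = b (+) decode f s m.
Proof. by move=> fs; case: b; rewrite ?addn1 ?(doubleN (fs m)) ?addn0. Qed.

Lemma decode_axaxa_free (f : nat -> bool) s :
  axaxa_free f -> blocks_from f s -> axaxa_free (decode f s).
Proof.
move=> f_free fs i p p_gt0 ovl; apply: (@f_free (s + 2 * i) (2 * p)).
  by rewrite muln_gt0.
move=> k; rewrite -(odd_double_half k) -mul2n; move: (odd k) k./2 => b h le_k.
rewrite (_ : s + 2 * i + (b + 2 * h) = s + 2 * (i + h) + b); last by lia.
rewrite (_ : s + 2 * (i + h) + b + 2 * p = s + 2 * (i + h + p) + b); last by lia.
by rewrite !blocks_fromE // ovl //; lia.
Qed.

Definition square_period (T : Type) (f : nat -> T) (i p : nat) : Prop :=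
  forall k, k < p -> f (i + k) = f (i + k + p).

Lemma square_atP (T : eqType) (f : nat -> T) i :
  square_at f i -> exists2 p, 0 < p & square_period f i p.
Proof.
move=> [x [x_nil fx]]; exists (size x); first by rewrite lt0n size_eq0.
move=> k lt_kx.
have := congr1 (nth (f i) ^~ k) fx; have := congr1 (nth (f i) ^~ (size x + k)) fx.
rewrite /factor !nth_mkseq ?nth_cat ?lt_kx ?ltnNge ?leq_addr ?addKn; try lia.
by rewrite /= -addnA (addnC k) => -> ->.
Qed.

Section OddOffsetSquares.

Variables (f : nat -> bool) (s : nat).
Hypotheses (f_free : axaxa_free f) (fs : blocks_from f s).

Lemma odd_offset_square_period j p :
  0 < p -> square_period f (s + 2 * j).+1 p -> p = 1 \/ p = 3.
Proof.
move=> p_gt0 sq; rewrite -(odd_double_half p) -mul2n in p_gt0 sq *.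
move: (odd p) p./2 p_gt0 sq => [] q /= p_gt0 sq; last first.
  rewrite add0n in p_gt0 sq.
  case: (@f_free (s + 2 * j) (2 * q) p_gt0) => -[_|k lt_k]; last first.
    by have := sq k lt_k; rewrite !addSn !addnS.
  have := sq 0 p_gt0; rewrite !addn0 addSn -!(addnA s) -mulnDr.
  by rewrite !(doubleN (fs _)) => /(congr1 negb); rewrite !negbK.
rewrite add1n in sq *; case: q {p_gt0} sq => [|[|q]] sq; [by left | by right | exfalso].
have no_double n m : n = s + 2 * m -> ~~ double f n by move->.
set P := (s + 2 * j).+1 in sq *.
have sq_double k : k.+1 < (2 * q.+2).+1 ->
    double f (P + k) = double f (P + k + (2 * q.+2).+1).
  move=> lt_k; rewrite /double -!addnS !sq ?addnS ?addSn //; lia.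
have [k lt_k4 dk] := double_in_window f_free P.
case: k lt_k4 dk => [|[|[|[|]]]] // _; apply/negP.
- rewrite sq_double; last lia.
  by apply: (no_double _ (j + q + 3)); rewrite /P; lia.
- by apply: (no_double _ (j + 1)); rewrite /P; lia.
- rewrite sq_double; last lia.
  by apply: (no_double _ (j + q + 4)); rewrite /P; lia.
- by apply: (no_double _ (j + 2)); rewrite /P; lia.
Qed.

Lemma no_square_at_odd_offset j :
    decode f s j = decode f s j.+1 -> decode f s j.+3 = decode f s j.+1 ->
  ~ square_at f (s + 2 * j).+1.
Proof.
move=> y01 y31 /square_atP[p p_gt0 sq].
case: (odd_offset_square_period p_gt0 sq) => p_eq; subst p.
- have := sq 0 isT; rewrite addn0 (doubleN (fs j)) -/(decode f s j) y01.
  rewrite (_ : (s + 2 * j).+1 + 1 = s + 2 * j.+1); last by lia.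
  by rewrite -/(decode f s j.+1); case: (decode f s j.+1).
- have := sq 2 isT.
  rewrite (_ : (s + 2 * j).+1 + 2 = (s + 2 * j.+1).+1); last by lia.
  rewrite (_ : (s + 2 * j.+1).+1 + 3 = s + 2 * j.+3); last by lia.
  rewrite (doubleN (fs j.+1)) -/(decode f s j.+1) -/(decode f s j.+3) y31.
  by case: (decode f s j.+1).
Qed.

End OddOffsetSquares.

Lemma flip_double_decode (f : nat -> bool) s k :
    blocks_from f s -> ~~ double (decode f s) k -> double (decode f s) k.+1 ->
  f (s + 2 * k).+1 = f (s + 2 * k).+2 /\ f (s + 2 * k).+4 = f (s + 2 * k).+2.
Proof.
rewrite /double /decode => fs flip_k /eqP dbl.
rewrite (_ : (s + 2 * k).+4 = s + 2 * k.+2) 1?(_ : (s + 2 * k).+2 = s + 2 * k.+1);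
  try lia.
rewrite (doubleN (fs k)) -dbl; split=> //.
by move: flip_k; case: (f (s + 2 * k)); case: (f (s + 2 * k.+1)).
Qed.

Theorem theorem1 (w : nat -> bool) :
  overlap_free_inf w -> exists i : nat, ~ square_at w i.
Proof.
move=> /overlap_free_inf_axaxa_free w_free.
have [s ws] := exists_blocks_from w_free.
have y_free := decode_axaxa_free w_free ws.
have [t yt] := exists_blocks_from y_free.
have [k [flip_k dbl]] := exists_flip_double (decode_axaxa_free y_free yt).
have [y01 y31] := flip_double_decode yt flip_k dbl.
by exists (s + 2 * (t + 2 * k).+1).+1; apply: no_square_at_odd_offset.
Qed.
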